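(* Let $\overline{M}\in\{1,2,\dots\}\cup\{\infty\}$. In the random coefficients perturbed utility model described in the context, suppose that Assumptions 1–6 (as stated in the context) hold for each natural number $M\le\overline{M}$, and that the distribution $\nu$ of $\beta$ is determined by its moments of order at most $\overline{M}$ (i.e. any probability distribution having the same moments of all orders $M\le \overline{M}$ equals $\nu$). Then the distribution of $\beta$ is identified.
   Context: Model. There are $K$ goods. For each good $k\in\{1,\dots,K\}$ there is a covariate vector $x_k=(x_{k,1},\dots,x_{k,d_k})'\in\mathbb{R}^{d_k}$ and a random coefficient vector $\beta_k=(\beta_{k,1},\dots,\beta_{k,d_k})'\in\mathbb{R}^{d_k}$; write $x=(x_1',\dots,x_K')'\in\mathbb{R}^{d}$ with $d=\sum_k d_k$, and $\beta=(\beta_1',\dots,\beta_K')'$. Let $\varepsilon$ be an unobservable of unrestricted dimension taking values in a measurable space $E$, let $B\subseteq\mathbb{R}^K$ be a feasibility set and $D:B\times E\to\mathbb{R}\cup\{-\infty\}$ a disturbance. Choices satisfy $Y(x,\beta,\varepsilon)\in\arg\max_{y\in B}\sum_{k=1}^K y_k(\beta_k'x_k)+D(y,\varepsilon)$ (argmax nonempty). The average structural function is $\overline{Y}(x)=\int Y(x,\beta,\varepsilon)\,d\tau(\beta,\varepsilon)$ for a probability measure $\tau$ not depending on $x$; $\overline{Y}_k$ is its $k$-th component. Assumption 1: under $\tau$, $\beta$ and $\varepsilon$ are independent, $\tau=\nu\otimes\mu$, and $\overline{Y}(x)$ is finite. Define $\overline{Y}(x,\beta)=\int Y(x,\beta,\varepsilon)\,d\mu(\varepsilon)$,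 so $\overline{Y}(x)=\int\overline{Y}(x,\beta)\,d\nu(\beta)$. Let $\overline{B}$ be the convex hull of $B$ and $\overline{D}(y)=\sup\{\int D(\tilde Y(\varepsilon),\varepsilon)\,d\mu(\varepsilon):\tilde Y:E\to B\text{ measurable},\ \int\tilde Y\,d\mu=y\}$ ($\sup\emptyset=-\infty$). Assumption 2: (i) $\overline{Y}(x,\beta)$ equals (is the unique element of) $\arg\max_{y\in\overline{B}}\sum_k y_k(\beta_k'x_k)+\overline{D}(y)$; (ii) $\overline{B}$ is nonempty, closed, convex; (iii) $\overline{D}:\mathbb{R}^K\to\mathbb{R}\cup\{-\infty\}$ is concave, upper semicontinuous, finite at some $y\in\overline{B}$. Define $V(u)=\max_{y\in\overline{B}}\sum_k y_ku_k+\overline{D}(y)$, $u\in\mathbb{R}^K$, and $\partial_\gamma V=\partial_{\gamma_1}\cdots\partial_{\gamma_m}V$ for $\gamma\in\{1,\dots,K\}^m$. Assumption 3: all covariates are continuous, and each $x_k$ is specific to good $k$ (enters only $\beta_k'x_k$). Assumption 4 (for $M$): $\int\beta_{1,1}^M\,d\nu$ is finite, known a priori, and nonzero. Assumption 5 (for $M$): (i) for each $k$ and every $M$-th order partial derivative, $\partial_{x_{k_1,\ell_1}}\cdots\partial_{x_{k_M,\ell_M}}\overline{Y}_k(0)=\int\partial_{x_{k_1,\ell_1}}\cdots\partial_{x_{k_M,\ell_M}}\overline{Y}_k(0,\beta)\,d\nu(\beta)$; (ii) all $M$-th order moments $\int\beta_{k_1,\ell_1}\cdots\beta_{k_M,\ell_M}\,d\nu$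 exist and are finite; (iii) $V$ is $(M+1)$-times continuously differentiable near $0$; (iv) $\partial_\gamma V(0)\ne0$ for all $\gamma\in\{1,\dots,K\}^{M+1}$; (v) $\overline{Y}(x)$ is known on a neighborhood of $0$, or more generally on $H\cap\mathbb{R}^d_+$ for a neighborhood $H$ of $0$. Assumption 6 (for $M$): for each $(k_1,\dots,k_M)\in\{1,\dots,K\}^M$ there exist $\ell_m\in\{1,\dots,d_{k_m}\}$ with $\int\beta_{k_1,\ell_1}\cdots\beta_{k_M,\ell_M}\,d\nu$ existing and nonzero. Identification: a quantity is identified if it is uniquely determined by the objects assumed known (the average structural function on the stated region and the quantities assumed known a priori), i.e. all specifications $(B,D,\mu,\nu)$ satisfying the hypotheses and generating the same known objects yield the same value. *)

From HB Require Import structures.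
From mathcomp Require Import all_boot all_order all_algebra.
From mathcomp Require Import all_classical all_reals all_analysis.
Set Implicit Arguments.
Unset Strict Implicit.
Unset Printing Implicit Defensive.
Import Order.TTheory GRing.Theory Num.Theory.
Import numFieldNormedType.Exports.
Local Open Scope classical_set_scope.
Local Open Scope ring_scope.

Section Model.
Variables (R : realType) (K : nat) (dk : 'I_K -> nat).

(* coordinate index (k, l) of x = (x_1', ..., x_K')' : good k, l < d_k *)
Definition Idx := {k : 'I_K & 'I_(dk k)}.
Definition cidx (k : 'I_K) (l : 'I_(dk k)) : Idx := existT _ k l.

Definition cvec := Idx -> R.

(* product (Borel) sigma-algebra on R^d: generated by the coordinates *)
Definition coord_gen : set (set cvec) :=
  [set S | exists (c : Idx) (A : set R), measurable A /\
           S = (fun b : cvec => b c) @^-1` A].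
Definition betaT := g_sigma_algebraType coord_gen.

Definition dotk (b x : cvec) (k : 'I_K) : R :=
  \sum_(l < dk k) b (cidx l) * x (cidx l).
Definition uvec (b x : cvec) : 'rV[R]_K := \row_k dotk b x k.

Definition util (u : 'rV[R]_K) (Dy : 'rV[R]_K -> \bar R) (y : 'rV[R]_K)
  : \bar R := ((\sum_k y 0 k * u 0 k)%:E + Dy y)%E.

Definition is_argmax (S : set 'rV[R]_K) (f : 'rV[R]_K -> \bar R) y :=
  S y /\ forall y', S y' -> (f y' <= f y)%E.

Definition conv_hull (B : set 'rV[R]_K) : set 'rV[R]_K :=
  [set y | exists (n : nat) (w : 'I_n -> R) (p : 'I_n -> 'rV[R]_K),
     (forall i, 0 <= w i) /\ \sum_i w i = 1 /\ (forall i, B (p i)) /\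
     y = \sum_i w i *: p i].

Definition is_convex (S : set 'rV[R]_K) :=
  forall a b (t : R), S a -> S b -> 0 <= t <= 1 -> S (t *: a + (1 - t) *: b).

Definition concave_e (f : 'rV[R]_K -> \bar R) :=
  forall a b (t : R), 0 <= t <= 1 ->
    (t%:E * f a + (1 - t)%:E * f b <= f (t *: a + (1 - t) *: b)%R)%E.

Definition usc (f : 'rV[R]_K -> \bar R) :=
  forall y (a : R), (f y < a%:E)%E -> \forall y' \near y, (f y' < a%:E)%E.

Definition mom (s : seq Idx) (b : cvec) : R := \prod_(c <- s) b c.

Definition zerox : cvec := fun _ => 0.

Definition shiftx (x : cvec) (c : Idx) (t : R) : cvec :=
  fun c' => if c' == c then x c' + t else x c'.

Definition pderivx (f : cvec -> R) (s : seq Idx) : cvec -> R :=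
  foldr (fun c g => fun x => derive (fun t => g (shiftx x c t)) 0 1) f s.

Fixpoint pderivablex (f : cvec -> R) (s : seq Idx) (x : cvec) : Prop :=
  match s with
  | [::] => True
  | c :: s' => derivable (fun t => pderivx f s' (shiftx x c t)) 0 1 /\
               \forall t \near (0 : R), pderivablex f s' (shiftx x c t)
  end.

Definition pderivV (f : 'rV[R]_K -> R) (g : seq 'I_K) : 'rV[R]_K -> R :=
  foldr (fun k h => fun u => derive h u (delta_mx 0 k)) f g.

Definition Cn_near (f : 'rV[R]_K -> R) (m : nat) (a : 'rV[R]_K) :=
  \forall u \near a,
    (forall g : seq 'I_K, (size g < m)%N ->
       forall k, derivable (pderivV f g) u (delta_mx 0 k)) /\
    (forall g : seq 'I_K, (size g <= m)%N -> {for u, continuous (pderivV f g)}).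

(* M <= Mbar, Mbar in {1,2,...} \cup {oo} (None = oo) *)
Definition upto (Mbar : option nat) (M : nat) : bool :=
  if Mbar is Some m then (M <= m)%N else true.

Section Spec.
Variables (d : measure_display) (E : measurableType d)
  (B : set 'rV[R]_K) (D : 'rV[R]_K -> E -> \bar R)
  (mu : probability E R) (nu : probability betaT R)
  (Y : cvec -> cvec -> E -> 'rV[R]_K).

Definition model :=
  (forall y e, B y -> D y e != +oo%E) /\
  forall (x b : cvec) e,
    is_argmax B (util (uvec b x) (D ^~ e)) (Y x b e).

Definition ASF (x : cvec) (k : 'I_K) : \bar R :=
  (\int[(nu \x mu)%E]_z (Y x z.1 z.2 0 k)%:E)%E.

Definition Ybar (x b : cvec) (k : 'I_K) : \bar R :=
  (\int[mu]_e (Y x b e 0 k)%:E)%E.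

Definition Bbar := conv_hull B.

Definition Dbar (y : 'rV[R]_K) : \bar R :=
  ereal_sup [set (\int[mu]_e D (Yt e) e)%E | Yt in
     [set Yt : E -> 'rV[R]_K | (forall e, B (Yt e)) /\
        forall k, mu.-integrable setT (fun e => (Yt e 0 k)%:E) /\
                  (\int[mu]_e (Yt e 0 k)%:E = (y 0 k)%:E)%E]].

Definition V (u : 'rV[R]_K) : \bar R :=
  ereal_sup [set util u Dbar y | y in Bbar].

Definition assumption1 :=
  forall x k, (nu \x mu)%E.-integrable setT
                (fun z : betaT * E => (Y x z.1 z.2 0 k)%:E).

Definition assumption2 :=
  (forall x b : cvec, exists y0 : 'rV[R]_K,
     (forall k, Ybar x b k = (y0 0 k)%:E) /\
     [set y | is_argmax Bbar (util (uvec b x) Dbar) y] = [set y0]) /\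
  (Bbar !=set0 /\ closed Bbar /\ is_convex Bbar) /\
  ((forall y, Dbar y != +oo%E) /\ concave_e Dbar /\ usc Dbar /\
   exists2 y, Bbar y & Dbar y \is a fin_num).

Variables (hK : (0 < K)%N) (hd1 : (0 < dk (Ordinal hK))%N).
Definition c11 : Idx := cidx (Ordinal hd1).

Definition assumption4 (M : nat) :=
  nu.-integrable setT (fun b => (mom (nseq M c11) b)%:E) /\
  (\int[nu]_b (mom (nseq M c11) b)%:E != 0)%E.

Definition assumption5 (M : nat) :=
  (forall (k : 'I_K) (s : seq Idx), size s = M ->
     pderivablex (fun x => fine (ASF x k)) s zerox /\
     (pderivx (fun x => fine (ASF x k)) s zerox)%:E =
       (\int[nu]_b (pderivx (fun x => fine (Ybar x b k)) s zerox)%:E)%E) /\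
  (forall s : seq Idx, size s = M ->
     nu.-integrable setT (fun b => (mom s b)%:E)) /\
  ((\forall u \near (0 : 'rV[R]_K), V u \is a fin_num) /\
   Cn_near (fun u => fine (V u)) M.+1 0) /\
  (forall g : seq 'I_K, size g = M.+1 -> pderivV (fun u => fine (V u)) g 0 != 0).

Definition assumption6 (M : nat) :=
  forall ks : seq 'I_K, size ks = M ->
    exists s : seq Idx, map tag s = ks /\
      nu.-integrable setT (fun b => (mom s b)%:E) /\
      (\int[nu]_b (mom s b)%:E != 0)%E.

Definition moment_determinate (Mbar : option nat) :=
  forall nu' : probability betaT R,
    (forall (s : seq Idx), (0 < size s)%N -> upto Mbar (size s) ->
       nu'.-integrable setT (fun b => (mom s b)%:E) /\
       (\int[nu']_b (mom s b)%:E = \int[nu]_b (mom s b)%:E)%E) ->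
    forall A, measurable A -> nu' A = nu A.

Definition hypotheses (Mbar : option nat) :=
  model /\ assumption1 /\ assumption2 /\
  (forall M, (0 < M)%N -> upto Mbar M ->
     assumption4 M /\ assumption5 M /\ assumption6 M) /\
  moment_determinate Mbar.

End Spec.
End Model.

Definition Mbar_ok (Mbar : option nat) : bool :=
  if Mbar is Some m then (0 < m)%N else true.

From HB Require Import structures.
From mathcomp Require Import all_boot all_order all_algebra.
From mathcomp Require Import all_classical all_reals all_analysis.
From mathcomp Require Import ring lra zify.
Set Implicit Arguments.
Unset Strict Implicit.
Unset Printing Implicit Defensive.
Import Order.TTheory GRing.Theory Num.Theory.
Import numFieldNormedType.Exports.
Local Open Scope classical_set_scope.
Local Open Scope ring_scope.

(* By Assumption 2(i) and the envelope theorem, the mean choice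
   Ybar(x, beta) is the gradient of V at u = (beta_k' x_k)_k.  Differentiating
   M times in the covariates x_{k_1,l_1}, ..., x_{k_M,l_M} at x = 0 and
   integrating against nu (Assumption 5(i)) gives
     d^M ASF_k(0) = d_{k_1 .. k_M k} V(0) * E[beta_{k_1,l_1} ... beta_{k_M,l_M}],
   and since derivatives at the corner 0 are determined by one-sided
   increments, the left-hand side is identified from the ASF on [0, eps)^d.
   The known moment E[beta_{1,1}^M] identifies d_{1..1 k} V(0) for every k.
   A nonzero moment with goods (k_1, ..., k_M) (Assumption 6) transfers the
   identification of d_{k_1..k_M k} V(0) from one k to every k', and the
   symmetry of partial derivatives of V lets one replace the goods 1, ..., 1
   one at a time.  All (M+1)-th derivatives of V at 0 being identified and
   nonzero (Assumption 5(iv)), every moment of order M is identified, and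
   moment determinacy identifies nu. *)

Section DirectionalDerivative.
Variables (R : realType) (V : normedModType R).
Implicit Types (f : V -> R) (a c v : V).

Let line_quotient f a v (s : R) :
  (fun h : R => h^-1 *: (((fun t : R => f (a + t *: v)) \o shift s) (h *: 1) -
                          f (a + s *: v))) =
  (fun h : R => h^-1 *: ((f \o shift (a + s *: v)) (h *: v) - f (a + s *: v))).
Proof.
apply/funext => h /=; congr (_ *: (f _ - _)).
by rewrite [h *: 1]mulr1 scalerDl addrCA addrC.
Qed.

Lemma derive_along_line f a v (s : R) :
  'D_1 (fun t : R => f (a + t *: v)) s = 'D_v f (a + s *: v).
Proof. by rewrite /derive line_quotient. Qed.

Lemma derivable_along_line f a v (s : R) :
  derivable (fun t : R => f (a + t *: v)) s 1 <-> derivable f (a + s *: v) v.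
Proof. by rewrite /derivable line_quotient. Qed.

Let translate_quotient f c a v :
  (fun h : R => h^-1 *: (((fun x => f (x + c)) \o shift a) (h *: v) - f (a + c))) =
  (fun h : R => h^-1 *: ((f \o shift (a + c)) (h *: v) - f (a + c))).
Proof. by apply/funext => h /=; rewrite addrA. Qed.

Lemma derive_translate f c a v : 'D_v (fun x => f (x + c)) a = 'D_v f (a + c).
Proof. by rewrite /derive translate_quotient. Qed.

Lemma derivable_translate f c a v :
  derivable (fun x => f (x + c)) a v <-> derivable f (a + c) v.
Proof. by rewrite /derivable translate_quotient. Qed.

Let line_scale f a v (k : R) :
  (fun t => f (a + t *: (k *: v))) = (fun t : R => f (a + t *: v)) \o ( *%R k).
Proof. by apply/funext => t /=; rewrite scalerA mulrC. Qed.

Let derivable_mulr (k t : R) : derivable ( *%R k) t 1.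
Proof. by rewrite (_ : *%R k = k \*: id) //; apply/derivableZ/derivable_id. Qed.

Let derive_mulr (k t : R) : 'D_1 ( *%R k) t = k.
Proof.
by rewrite (_ : *%R k = k \*: id) // deriveZ ?derive_id // /GRing.scale /= mulr1.
Qed.

Lemma derivable_scale_dir f a v (k : R) : derivable f a v -> derivable f a (k *: v).
Proof.
move=> df; rewrite -[a]addr0 -(scale0r (k *: v)) -derivable_along_line line_scale.
apply/derivable1_diffP/differentiable_comp; first exact/derivable1_diffP.
by apply/derivable1_diffP/derivable_along_line; rewrite mulr0 scale0r addr0.
Qed.

Lemma derive_scale_dir f a v (k : R) : derivable f a v -> 'D_(k *: v) f a = k * 'D_v f a.
Proof.
move=> df; rewrite -[in LHS](addr0 a) -(scale0r (k *: v)) -derive_along_line line_scale.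
have dline : derivable (fun t : R => f (a + t *: v)) (k * 0) 1.
  by apply/derivable_along_line; rewrite mulr0 scale0r addr0.
have := derive1_comp (@derivable_mulr k 0) dline; rewrite !derive1E => ->.
by rewrite derive_along_line derive_mulr mulr0 scale0r addr0 mulrC.
Qed.

End DirectionalDerivative.

Section Neighbourhoods.
Variables (R : realType) (V : normedModType R).

Lemma near_plane (P : set V) u v w : (\forall x \near u, P x) ->
  exists2 d : R, 0 < d & forall s t : R, `|s| < d -> `|t| < d -> P (u + t *: w + s *: v).
Proof.
move=> /nbhs_normP [r r0 Pr]; set c := `|v| + `|w| + 1.
have c0 : 0 < c by rewrite /c ltr_wpDl // addr_ge0.
exists (r / c) => [|s t hs ht]; first by rewrite divr_gt0.
apply: Pr => /=; rewrite -addrA opprD addrA subrr sub0r normrN.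
apply: (le_lt_trans (ler_normD _ _)); rewrite !normrZ.
have lew : `|t| * `|w| <= r / c * `|w| by rewrite ler_wpM2r // ltW.
have lev : `|s| * `|v| <= r / c * `|v| by rewrite ler_wpM2r // ltW.
apply: (le_lt_trans (lerD lew lev)).
rewrite -mulrDr [X in _ < X](_ : r = r / c * c); last by rewrite divfK // gt_eqF.
by rewrite ltr_pM2l ?divr_gt0 // /c addrC ltrDl.
Qed.

Lemma near_line (P : set V) u w : (\forall x \near u, P x) ->
  \forall t \near (0 : R), P (u + t *: w).
Proof.
move=> /(near_plane 0 w) [d d0 Pd]; exists d => //= t.
rewrite /ball_ /= sub0r normrN => td.
by have := Pd 0 t; rewrite normr0 scaler0 addr0; apply.
Qed.

End Neighbourhoods.

Section SymmetryOfSecondDerivatives.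
Variables (R : realType) (V : normedModType R).
Implicit Types (f : V -> R) (u v w : V).

Lemma mvt_along_line f u v (h : R) : 0 < h ->
  (forall s : R, 0 <= s <= h -> derivable f (u + s *: v) v) ->
  exists2 s : R, 0 < s < h & f (u + h *: v) - f u = 'D_v f (u + s *: v) * h.
Proof.
move=> h0 df.
have dline s : s \in `[0, h] -> derivable (fun t : R => f (u + t *: v)) s 1.
  by rewrite in_itv /= => /df; rewrite -derivable_along_line.
have dline' s : s \in `]0, h[ ->
    is_derive s 1 (fun t : R => f (u + t *: v)) ('D_v f (u + s *: v)).
  move=> sh; apply: DeriveDef; last by rewrite derive_along_line.
  by apply: dline; move: sh; rewrite !in_itv /= => /andP[/ltW -> /ltW ->].
have cline : {within `[0, h], continuous (fun t : R => f (u + t *: v))}.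
  exact: derivable_within_continuous.
have [s sh] := MVT h0 dline' cline; rewrite scale0r addr0 subr0 => Es.
by exists s; first by move: sh; rewrite in_itv.
Qed.

(* MVT along v for x |-> f (x + h w) - f x, then MVT along w. *)
Lemma second_difference_mvt f u v w (h d : R) : 0 < h -> h < d ->
  (forall s t : R, `|s| < d -> `|t| < d ->
     derivable f (u + t *: w + s *: v) v /\
     derivable (fun x => 'D_v f x) (u + t *: w + s *: v) w) ->
  exists s t : R, [/\ 0 < s < h, 0 < t < h &
    f (u + h *: w + h *: v) - f (u + h *: w) - f (u + h *: v) + f u =
    'D_w (fun x => 'D_v f x) (u + t *: w + s *: v) * h * h].
Proof.
move=> h0 hd df.
have small s : 0 <= s <= h -> `|s| < d.
  by move=> /andP[s0 sh]; rewrite ger0_norm // (le_lt_trans sh).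
have hh : 0 <= h <= h by rewrite (ltW h0) /=.
have h00 : 0 <= (0 : R) <= h by rewrite (ltW h0) lexx.
have dv s t : 0 <= s <= h -> 0 <= t <= h ->
    derivable f (u + s *: v + t *: w) v.
  by move=> /small sd /small td; rewrite addrAC; case: (df _ _ sd td).
have ddiff s : 0 <= s <= h ->
    derivable (fun x => f (x + h *: w) - f x) (u + s *: v) v.
  move=> sh; apply: derivableB; first exact/derivable_translate/dv.
  by have := dv s 0 sh h00; rewrite scale0r addr0.
have [s sh Es] := mvt_along_line h0 ddiff.
have s0h : 0 <= s <= h by case/andP: sh => /ltW -> /ltW ->.
have ddv t : 0 <= t <= h ->
    derivable (fun x => 'D_v f x) (u + s *: v + t *: w) w.
  by move=> /small td; rewrite addrAC; case: (df _ _ (small _ s0h) td).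
have [t th Et] := mvt_along_line h0 ddv.
exists s, t; split => //.
move: Es; rewrite deriveB; last 2 first.
- exact/derivable_translate/dv.
- by have := dv s 0 s0h h00; rewrite scale0r addr0.
rewrite derive_translate => Es.
rewrite [u + t *: w + s *: v]addrAC -Et -Es [u + h *: w + h *: v]addrAC.
ring.
Qed.

Lemma schwarz_approx f u v w :
  (\forall x \near u, [/\ derivable f x v, derivable f x w,
      derivable (fun y => 'D_v f y) x w & derivable (fun y => 'D_w f y) x v]) ->
  {for u, continuous (fun x => 'D_w (fun y => 'D_v f y) x)} ->
  {for u, continuous (fun x => 'D_v (fun y => 'D_w f y) x)} ->
  forall e : R, 0 < e ->
  `|'D_w (fun y => 'D_v f y) u - 'D_v (fun y => 'D_w f y) u| < e + e.
Proof.
move=> df cvw cwv e e0.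
have nvw := proj1 (cvgrPdist_lt _ _) cvw e e0; have {}nvw := nvw (nbhs_filter u).
have nwv := proj1 (cvgrPdist_lt _ _) cwv e e0; have {}nwv := nwv (nbhs_filter u).
have [d d0 Hd] := near_plane v w (filterI df (filterI nvw nwv)).
have [h h0 hd] : exists2 h : R, 0 < h & h < d.
  by exists (d / 2); rewrite ?divr_gt0 // ltr_pdivrMr // ltr_pMr // ltr1n.
have dvw s t : `|s| < d -> `|t| < d ->
    derivable f (u + t *: w + s *: v) v /\
    derivable (fun y => 'D_v f y) (u + t *: w + s *: v) w.
  by move=> sd td; have [[? _ ? _] _] := Hd s t sd td.
have dwv s t : `|s| < d -> `|t| < d ->
    derivable f (u + t *: v + s *: w) w /\
    derivable (fun y => 'D_w f y) (u + t *: v + s *: w) v.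
  by move=> sd td; have [[_ ? _ ?] _] := Hd t s td sd; rewrite addrAC.
have [s [t [sh th Evw]]] := second_difference_mvt h0 hd dvw.
have [s' [t' [sh' th' Ewv]]] := second_difference_mvt h0 hd dwv.
have small x : 0 < x < h -> `|x| < d.
  by move=> /andP[x0 xd]; rewrite gtr0_norm // (lt_trans xd).
have [_ [nA _]] := Hd s t (small _ sh) (small _ th).
have [_ [_ nB]] := Hd t' s' (small _ th') (small _ sh').
have eqAB : 'D_w (fun y => 'D_v f y) (u + t *: w + s *: v) =
            'D_v (fun y => 'D_w f y) (u + s' *: w + t' *: v).
  have hn0 : h != 0 by rewrite gt_eqF.
  apply: (mulIf hn0); apply: (mulIf hn0).
  rewrite !(addrAC u (_ *: v)) in Ewv.
  apply: etrans (esym Evw) (etrans _ Ewv).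
  by rewrite (addrAC _ (- f (u + h *: w))).
rewrite eqAB in nA; apply: le_lt_trans (ler_distD _ _ _) _.
by rewrite distrC in nB; apply: ltrD nA nB.
Qed.

Lemma schwarz f u v w :
  (\forall x \near u, [/\ derivable f x v, derivable f x w,
      derivable (fun y => 'D_v f y) x w & derivable (fun y => 'D_w f y) x v]) ->
  {for u, continuous (fun x => 'D_w (fun y => 'D_v f y) x)} ->
  {for u, continuous (fun x => 'D_v (fun y => 'D_w f y) x)} ->
  'D_w (fun y => 'D_v f y) u = 'D_v (fun y => 'D_w f y) u.
Proof.
move=> df cvw cwv; apply/subr0_eq/normr0_eq0/eqP.
rewrite eq_le normr_ge0 andbT; apply/ler_addgt0Pr => e e0; rewrite add0r.
by rewrite [e]splitr ltW // schwarz_approx // divr_gt0.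
Qed.

End SymmetryOfSecondDerivatives.

Section PartialDerivatives.
Variables (R : realType) (K : nat).
Implicit Types (f g : 'rV[R]_K -> R) (U : set 'rV[R]_K) (p q : seq 'I_K).

(* [Cn_near f m a] unfolds to [\forall u \near a, Cn_at f m u]. *)
Definition Cn_at f (m : nat) (u : 'rV[R]_K) :=
  (forall p, (size p < m)%N -> forall k, derivable (pderivV f p) u (delta_mx 0 k)) /\
  (forall p, (size p <= m)%N -> {for u, continuous (pderivV f p)}).

Lemma pderivV_cat f p q : pderivV f (p ++ q) = pderivV (pderivV f q) p.
Proof. by rewrite /pderivV foldr_cat. Qed.

Lemma pderivV_eq_in U f g : open U -> (forall u, U u -> f u = g u) ->
  forall p u, U u -> pderivV f p u = pderivV g p u.
Proof.
move=> oU fg; elim=> [|k p IH] u Uu /=; first exact: fg.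
apply: near_eq_derive; apply: filterS (open_nbhs_nbhs (conj oU Uu)) => v.
exact: IH.
Qed.

Variables (U : set 'rV[R]_K) (f : 'rV[R]_K -> R) (m : nat).
Hypotheses (oU : open U) (fCn : forall u, U u -> Cn_at f m u).

Lemma pderivV_swap a b q u : ((size q).+2 <= m)%N -> U u ->
  pderivV f (a :: b :: q) u = pderivV f (b :: a :: q) u.
Proof.
move=> qm Uu.
apply: (@schwarz _ _ (pderivV f q) u (delta_mx 0 b) (delta_mx 0 a)).
- apply: filterS (open_nbhs_nbhs (conj oU Uu)) => v /fCn [df _].
  by split; [apply: df; exact: ltnW | apply: df; exact: ltnW |
             apply: (df (b :: q)) | apply: (df (a :: q))].
- by have [_ cf] := fCn Uu; apply: (cf (a :: b :: q)).
- by have [_ cf] := fCn Uu; apply: (cf (b :: a :: q)).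
Qed.

Lemma pderivV_move_last u0 p a q : U u0 -> (size (p ++ a :: q) <= m)%N ->
  pderivV f (p ++ a :: q) u0 = pderivV f (p ++ q ++ [:: a]) u0.
Proof.
move=> Uu0; elim: q p => [|b q IH] p pqm //.
have swap : pderivV f (p ++ a :: b :: q) u0 = pderivV f (rcons p b ++ a :: q) u0.
  rewrite cat_rcons !pderivV_cat.
  apply: (@pderivV_eq_in U (pderivV f (a :: b :: q)) (pderivV f (b :: a :: q)) oU _
    p u0 Uu0) => u Uu.
  by apply: pderivV_swap => //; move: pqm; rewrite size_cat /=; lia.
rewrite swap IH ?cat_rcons //.
by move: pqm; rewrite !size_cat /=; lia.
Qed.

End PartialDerivatives.

Lemma derive_supporting_line (R : realType) (phi : R -> R) (a : R) :
  (\forall t \near 0, phi 0 + a * t <= phi t) ->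
  (\forall t \near 0, derivable phi t 1) -> 'D_1 phi 0 = a.
Proof.
move=> phi_ge dphi; have [d /= d0 Hd] := nbhs_norm0P.1 (filterI phi_ge dphi).
have ball_itv t : t \in `]-d, d[ -> `|t| < d by rewrite in_itv /= ltr_norml.
have dlin t : derivable (a \*: @id R) t 1 by apply/derivableZ/derivable_id.
have [_ /eqP] : is_derive (0 : R) (1 : R) (phi - a \*: @id R) 0.
  apply: (@derive1_at_min _ _ (- d) d); first by rewrite ge0_cp // ltW.
  - by move=> t /ball_itv /Hd [_ dt]; exact: derivableB.
  - by rewrite in_itv /= oppr_lt0 d0.
  move=> t /ball_itv /Hd [phit _].
  by change (phi 0 - a * 0 <= phi t - a * t); lra.
have dphi0 : derivable phi 0 1 by case: (Hd 0) => //=; rewrite normr0.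
rewrite deriveB // deriveZ ?derive_id // subr_eq0 => /eqP ->.
by rewrite /GRing.scale /= mulr1.
Qed.

Lemma sum_mul_add_delta (R : comPzRingType) (n : nat) (y u : 'rV[R]_n) (t : R) k :
  \sum_i y 0 i * (u + t *: delta_mx 0 k) 0 i = \sum_i y 0 i * u 0 i + t * y 0 k.
Proof.
have -> : \sum_i y 0 i * (u + t *: delta_mx 0 k) 0 i =
          \sum_i (y 0 i * u 0 i + t * (y 0 i * (delta_mx 0 k : 'rV_n) 0 i)).
  by apply: eq_bigr => i _; rewrite !mxE mulrDr mulrCA.
rewrite big_split /= -mulr_sumr; congr (_ + t * _).
rewrite (bigD1 k) //= mxE !eqxx mulr1 big1 ?addr0 // => i /negbTE ik.
by rewrite mxE ik andbF mulr0.
Qed.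

Section EnvelopeTheorem.
Variables (R : realType) (K : nat) (d : measure_display) (E : measurableType d)
  (B : set 'rV[R]_K) (D : 'rV[R]_K -> E -> \bar R) (mu : probability E R).
Local Notation Vf := (fun u => fine (V B D mu u)).

Lemma V_argmax u y0 : is_argmax (Bbar B) (util u (Dbar B D mu)) y0 ->
  V B D mu u = util u (Dbar B D mu) y0.
Proof.
move=> [By0 y0max]; apply/eqP; rewrite eq_le; apply/andP; split.
  by apply: ge_ereal_sup => _ [y By <-]; exact: y0max.
by apply: ereal_sup_ubound; exists y0.
Qed.

Lemma envelope (U : set 'rV[R]_K) u y0 k : open U ->
  (forall u, U u -> V B D mu u \is a fin_num /\
     derivable Vf u (delta_mx 0 k)) ->
  U u -> is_argmax (Bbar B) (util u (Dbar B D mu)) y0 ->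
  y0 0 k = 'D_(delta_mx 0 k) Vf u.
Proof.
move=> oU HU Uu y0max; set e : 'rV[R]_K := delta_mx 0 k.
have Vu := V_argmax y0max.
have fin_Dy0 : Dbar B D mu y0 \is a fin_num.
  by move: (HU u Uu).1; rewrite Vu /util fin_numD => /andP[].
have nearU := near_line e (open_nbhs_nbhs (conj oU Uu)).
rewrite -[u]addr0 -(scale0r e) -derive_along_line; symmetry.
apply: derive_supporting_line; apply: filterS nearU => t Ut.
  have [finV _] := HU _ Ut.
  have : (util (u + t *: e) (Dbar B D mu) y0 <= V B D mu (u + t *: e))%E.
    by apply: ereal_sup_ubound; exists y0 => //; case: y0max.
  rewrite /util sum_mul_add_delta -(fineK fin_Dy0) -EFinD -(fineK finV) lee_fin.
  by rewrite scale0r addr0 Vu /util -(fineK fin_Dy0) -EFinD /=; lra.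
by apply/(derivable_along_line Vf); exact: (HU _ Ut).2.
Qed.

End EnvelopeTheorem.

Lemma uvec_shiftx (R : realType) (K : nat) (dk : 'I_K -> nat) (b x : cvec R dk) c t :
  uvec b (shiftx x c t) = uvec b x + t *: (b c *: delta_mx 0 (tag c)).
Proof.
apply/rowP => k; rewrite !mxE /dotk /shiftx.
have -> : \sum_(l < dk k) b (cidx l) *
            (if cidx l == c then x (cidx l) + t else x (cidx l)) =
          \sum_(l < dk k) b (cidx l) * x (cidx l) +
          \sum_(l < dk k) (if cidx l == c then b (cidx l) * t else 0).
  by rewrite -big_split; apply: eq_bigr => l _ /=; case: ifP => _; ring.
congr (_ + _); case: c => kc lc /=.
have [<-|nk] := eqVneq kc k.
  rewrite mulr1 (bigD1 lc) //= eqxx big1 ?addr0; first by ring.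
  by move=> l /negbTE nl; rewrite /cidx eq_Tagged /= nl.
rewrite mulr0 mulr0 big1 // => l _.
by case: ifP => // /eqP /(congr1 tag) /= lk; rewrite lk eqxx in nk.
Qed.

Section ChainRule.
Variables (R : realType) (K : nat) (dk : 'I_K -> nat) (d : measure_display)
  (E : measurableType d) (B : set 'rV[R]_K) (D : 'rV[R]_K -> E -> \bar R)
  (mu : probability E R) (Y : cvec R dk -> cvec R dk -> E -> 'rV[R]_K).
Local Notation Vf := (fun u => fine (V B D mu u)).

Variables (M : nat) (U : set 'rV[R]_K).
Hypotheses (oU : open U) (HA2 : assumption2 B D mu Y)
  (VCn : forall u, U u -> V B D mu u \is a fin_num /\ Cn_at Vf M.+1 u).

Lemma Ybar_eq_dV x b k : U (uvec b x) ->
  fine (Ybar mu Y x b k) = pderivV Vf [:: k] (uvec b x).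
Proof.
move=> Uu; have [y0 [-> argmax_y0]] := HA2.1 x b.
apply: (envelope oU) => //; last by have : [set y0] y0 by []; rewrite -argmax_y0.
by move=> u /VCn [finV [dV _]]; split => //; exact: (dV [::]).
Qed.

Lemma pderivx_Ybar b k s : (size s <= M)%N -> forall x, U (uvec b x) ->
  pderivx (fun x => fine (Ybar mu Y x b k)) s x =
  mom s b * pderivV Vf (map tag s ++ [:: k]) (uvec b x).
Proof.
elim: s => [|c s IH] sM x Ux; first by rewrite /mom big_nil mul1r; exact: Ybar_eq_dV.
set G := pderivV Vf (map tag s ++ [:: k]).
set w : 'rV[R]_K := b c *: delta_mx 0 (tag c).
have nearU : \forall t \near 0, U (uvec b x + t *: w).
  exact: near_line (open_nbhs_nbhs (conj oU Ux)).
have -> : pderivx (fun x => fine (Ybar mu Y x b k)) (c :: s) x =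
          'D_1 (fun t : R => mom s b * G (uvec b x + t *: w)) 0.
  rewrite /=; apply: near_eq_derive; apply: filterS nearU => t Ut.
  by rewrite IH ?uvec_shiftx // ltnW.
have dG : derivable G (uvec b x) (delta_mx 0 (tag c)).
  by have [_ [dV _]] := VCn Ux; apply: dV; rewrite size_cat size_map addn1.
rewrite deriveMl; last first.
  by apply/(derivable_along_line G); rewrite scale0r addr0; exact: derivable_scale_dir.
rewrite derive_along_line scale0r addr0 derive_scale_dir //.
by rewrite /mom big_cons -/(mom s b) /=; ring.
Qed.

End ChainRule.

Lemma derive_eq_right (R : realType) (phi psi : R -> R) (d : R) : 0 < d ->
  derivable phi 0 1 -> derivable psi 0 1 ->
  (forall t, 0 <= t < d -> phi t = psi t) -> 'D_1 phi 0 = 'D_1 psi 0.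
Proof.
move=> d0 dphi dpsi phi_psi.
have phi_psi0 : phi 0 = psi 0 by apply: phi_psi; rewrite lexx d0.
rewrite /derive (cvg_at_rightE _ _ dphi) (cvg_at_rightE _ _ dpsi).
have near_eq : \forall h \near 0^'+,
    h^-1 *: ((phi \o shift 0) (h *: 1) - phi 0) =
    h^-1 *: ((psi \o shift 0) (h *: 1) - psi 0).
  exists d => //= h; rewrite /ball_ /= sub0r normrN => hd h0.
  by rewrite phi_psi0 [h *: 1]mulr1 /= addr0 phi_psi // (ltW h0) -(gtr0_norm h0).
congr lim; rewrite eqEsubset; split; apply/near_eq_cvg => //.
by apply: filterS near_eq => h ->.
Qed.

Section NonnegativeBox.
Variables (R : realType) (K : nat) (dk : 'I_K -> nat) (eps : R).

Definition nonneg_box : set (cvec R dk) := [set x | forall c, 0 <= x c < eps].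

Lemma shiftx_in_box x c t : nonneg_box x -> 0 <= t < eps - x c ->
  nonneg_box (shiftx x c t).
Proof.
move=> xbox /andP[t0 te] c'; rewrite /shiftx; case: eqP => [->|_]; last exact: xbox.
have /andP[xc0 _] := xbox c.
by rewrite addr_ge0 //= -ltrBrDl.
Qed.

(* Only one-sided increments stay in the box, which suffices for derivatives
   that are known to exist. *)
Lemma pderivx_eq_in_box (f g : cvec R dk -> R) :
  (forall x, nonneg_box x -> f x = g x) ->
  forall s x, nonneg_box x -> pderivablex f s x -> pderivablex g s x ->
  pderivx f s x = pderivx g s x.
Proof.
move=> fg; elim=> [|c s IH] x xbox /=; first by move=> _ _; exact: fg.
move=> [df near_df] [dg near_dg].
have [r /= r0 Hr] := filterI near_df near_dg.
have /andP[_ xce] := xbox c.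
have pos : 0 < Num.min r (eps - x c) by rewrite lt_min r0 subr_gt0.
apply: (derive_eq_right pos df dg) => t /andP[t0]; rewrite lt_min => /andP[tr te].
have := Hr t; rewrite /ball_ /= sub0r normrN ger0_norm // => /(_ tr) [pf pg].
by apply: IH => //; apply: shiftx_in_box; rewrite ?t0.
Qed.

End NonnegativeBox.

Lemma uvec_zerox (R : realType) (K : nat) (dk : 'I_K -> nat) (b : cvec R dk) :
  uvec b (@zerox R K dk) = 0.
Proof. by apply/rowP => k; rewrite !mxE /dotk big1 // => l _; rewrite mulr0. Qed.

Section ASFDerivatives.
Variables (R : realType) (K : nat) (dk : 'I_K -> nat) (d : measure_display)
  (E : measurableType d) (B : set 'rV[R]_K) (D : 'rV[R]_K -> E -> \bar R)
  (mu : probability E R) (nu : probability (betaT R dk) R)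
  (Y : cvec R dk -> cvec R dk -> E -> 'rV[R]_K) (M : nat).
Hypotheses (HA2 : assumption2 B D mu Y) (HA5 : assumption5 B D mu nu Y M).
Local Notation Vf := (fun u => fine (V B D mu u)).

Lemma V_Cn_open : exists U : set 'rV[R]_K, [/\ open U, U 0 &
  forall u, U u -> V B D mu u \is a fin_num /\ Cn_at Vf M.+1 u].
Proof.
have [_ [_ [[finV VCn] _]]] := HA5.
have near0 : \forall u \near (0 : 'rV[R]_K), V B D mu u \is a fin_num /\ Cn_at Vf M.+1 u.
  exact: filterI.
exists (interior [set u | V B D mu u \is a fin_num /\ Cn_at Vf M.+1 u]); split.
- exact: open_interior.
- exact: nbhs_singleton (nbhs_interior near0).
- by move=> u /interior_subset.
Qed.

Lemma fin_num_moment s : size s = M -> (\int[nu]_b (mom s b)%:E)%E \is a fin_num.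
Proof. by move=> sM; apply: (integrable_fin_num measurableT); exact: HA5.2.1. Qed.

Lemma dV_move_last p a q : size (p ++ a :: q) = M.+1 ->
  pderivV Vf (p ++ a :: q) 0 = pderivV Vf (p ++ q ++ [:: a]) 0.
Proof.
move=> pqM; have [U [oU U0 VCn]] := V_Cn_open.
apply: (pderivV_move_last (m := M.+1) oU) => //; last by rewrite pqM.
by move=> u /VCn [].
Qed.

Lemma pderivx_ASF s k : size s = M ->
  pderivx (fun x => fine (ASF mu nu Y x k)) s (@zerox R K dk) =
  pderivV Vf (map tag s ++ [:: k]) 0 * fine (\int[nu]_b (mom s b)%:E).
Proof.
move=> sM; have [U [oU U0 VCn]] := V_Cn_open.
have [_ ASF_eq] := HA5.1 k s sM.
apply: EFin_inj; rewrite ASF_eq EFinM fineK ?fin_num_moment // -integralZl //.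
  apply: eq_integral => b _; rewrite (pderivx_Ybar oU HA2 VCn) ?sM ?uvec_zerox //.
  by rewrite mulrC EFinM.
exact: HA5.2.1.
Qed.

End ASFDerivatives.

(* P1, P2 stand for the (M+1)-th derivatives of V at 0 and m1, m2 for the
   M-th moments of beta in two specifications; lbl sends a coefficient index
   (k, l) to its good k. *)
Section MomentPropagation.
Variables (F : fieldType) (I : eqType) (J : Type) (lbl : J -> I) (M : nat) (j1 : J).
Variables (P1 P2 : seq I -> F) (m1 m2 : seq J -> F).
Local Notation one := (lbl j1).

Hypothesis scaled_eq : forall s k, size s = M ->
  P1 (map lbl s ++ [:: k]) * m1 s = P2 (map lbl s ++ [:: k]) * m2 s.
Hypotheses (P1_move_last : forall p a q, size (p ++ a :: q) = M.+1 ->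
                             P1 (p ++ a :: q) = P1 (p ++ q ++ [:: a]))
           (P2_move_last : forall p a q, size (p ++ a :: q) = M.+1 ->
                             P2 (p ++ a :: q) = P2 (p ++ q ++ [:: a])).
Hypothesis P2_neq0 : forall g, size g = M.+1 -> P2 g != 0.
Hypotheses (m_base : m1 (nseq M j1) = m2 (nseq M j1)) (m1_base : m1 (nseq M j1) != 0).
Hypothesis m1_lift : forall ks, size ks = M -> exists2 s, map lbl s = ks & m1 s != 0.

Lemma P_eq_last tau k k' : size tau = M ->
  P1 (tau ++ [:: k]) = P2 (tau ++ [:: k]) -> P1 (tau ++ [:: k']) = P2 (tau ++ [:: k']).
Proof.
move=> tauM Pk; have [s ts m1s] := m1_lift tauM.
have sM : size s = M by rewrite -tauM -ts size_map.
rewrite -ts in Pk *.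
have gM : size (map lbl s ++ [:: k]) = M.+1 by rewrite size_cat size_map sM addn1.
have m12 : m1 s = m2 s by apply: (mulfI (P2_neq0 gM)); rewrite -scaled_eq // Pk.
by apply: (mulIf m1s); rewrite [in RHS]m12 scaled_eq.
Qed.

Lemma P_eq_nseq k : P1 (nseq M one ++ [:: k]) = P2 (nseq M one ++ [:: k]).
Proof.
by apply: (mulIf m1_base); rewrite [in RHS]m_base -map_nseq scaled_eq ?size_nseq.
Qed.

Lemma P_eq g : size g = M.+1 -> P1 g = P2 g.
Proof.
move nM : (count (predC1 one) g) => n; elim: n g nM => [|n IH] g gn gM.
  have /all_pred1P -> : all (pred1 one) g.
    apply/allP => a ag; apply: contraT => a1.
    have : has (predC1 one) g by apply/hasP; exists a.
    by rewrite has_count gn.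
  by rewrite gM -addn1 nseqD; exact: P_eq_nseq.
have /hasP [a ag a1] : has (predC1 one) g by rewrite has_count gn.
case/splitPr: ag gn gM => p q gn gM.
rewrite P1_move_last // P2_move_last // catA.
apply: (@P_eq_last (p ++ q) one); first by move: gM; rewrite !size_cat /=; lia.
rewrite -catA; apply: IH; last by move: gM; rewrite !size_cat /=; lia.
by move: gn; rewrite !count_cat /= eqxx (negbTE a1); lia.
Qed.

Lemma moments_eq s : size s = M -> m1 s = m2 s.
Proof.
move=> sM; have gM : size (map lbl s ++ [:: one]) = M.+1.
  by rewrite size_cat size_map sM addn1.
by apply: (mulfI (P2_neq0 gM)); rewrite -scaled_eq // P_eq.
Qed.

End MomentPropagation.

Section TwoSpecifications.
Variables (R : realType) (K : nat) (dk : 'I_K -> nat)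
  (hK : (0 < K)%N) (hd1 : (0 < dk (Ordinal hK))%N)
  (d1 : measure_display) (E1 : measurableType d1)
  (B1 : set 'rV[R]_K) (D1 : 'rV[R]_K -> E1 -> \bar R)
  (mu1 : probability E1 R) (nu1 : probability (betaT R dk) R)
  (Y1 : cvec R dk -> cvec R dk -> E1 -> 'rV[R]_K)
  (d2 : measure_display) (E2 : measurableType d2)
  (B2 : set 'rV[R]_K) (D2 : 'rV[R]_K -> E2 -> \bar R)
  (mu2 : probability E2 R) (nu2 : probability (betaT R dk) R)
  (Y2 : cvec R dk -> cvec R dk -> E2 -> 'rV[R]_K) (M : nat) (eps : R).
Hypotheses (A2_1 : assumption2 B1 D1 mu1 Y1) (A2_2 : assumption2 B2 D2 mu2 Y2)
  (A4_1 : assumption4 nu1 hd1 M) (A6_1 : assumption6 nu1 M)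
  (A5_1 : assumption5 B1 D1 mu1 nu1 Y1 M) (A5_2 : assumption5 B2 D2 mu2 nu2 Y2 M).
Hypothesis same_moment11 :
  (\int[nu1]_b (mom (nseq M (c11 hd1)) b)%:E = \int[nu2]_b (mom (nseq M (c11 hd1)) b)%:E)%E.
Hypotheses (eps0 : 0 < eps) (same_ASF : forall x, nonneg_box eps x ->
  forall k, ASF mu1 nu1 Y1 x k = ASF mu2 nu2 Y2 x k).

Local Notation dV1 g := (pderivV (fun u => fine (V B1 D1 mu1 u)) g 0).
Local Notation dV2 g := (pderivV (fun u => fine (V B2 D2 mu2 u)) g 0).
Local Notation m1 s := (fine (\int[nu1]_b (mom s b)%:E)%E).
Local Notation m2 s := (fine (\int[nu2]_b (mom s b)%:E)%E).

Lemma moments_identified s : size s = M ->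
  (\int[nu1]_b (mom s b)%:E = \int[nu2]_b (mom s b)%:E)%E.
Proof.
move=> sM; rewrite -(fineK (fin_num_moment A5_1 sM)) -(fineK (fin_num_moment A5_2 sM)).
congr (_%:E); apply: (@moments_eq _ _ _ tag M (c11 hd1) (fun g => dV1 g) (fun g => dV2 g)
  (fun s => m1 s) (fun s => m2 s)) => //.
- move=> t k tM; rewrite -(pderivx_ASF A2_1 A5_1) // -(pderivx_ASF A2_2 A5_2) //.
  apply: pderivx_eq_in_box => [x /same_ASF -> //| c | |].
  + by rewrite lexx eps0.
  + exact: (A5_1.1 k t tM).1.
  + exact: (A5_2.1 k t tM).1.
- exact: dV_move_last A5_1.
- exact: dV_move_last A5_2.
- by move=> g gM; exact: A5_2.2.2.2.
- by rewrite same_moment11.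
- by rewrite fine_eq0 ?A4_1.2 // (fin_num_moment A5_1) ?size_nseq.
- move=> ks ksM; have [t [tks [_ m1t]]] := A6_1 ksM.
  by exists t => //; rewrite fine_eq0 // (fin_num_moment A5_1) // -ksM -tks size_map.
Qed.

End TwoSpecifications.

Theorem corollary1 (R : realType) (K : nat) (dk : 'I_K -> nat)
  (hK : (0 < K)%N) (hd1 : (0 < dk (Ordinal hK))%N)
  (Mbar : option nat) (hMbar : Mbar_ok Mbar)
  (d1 : measure_display) (E1 : measurableType d1)
  (B1 : set 'rV[R]_K) (D1 : 'rV[R]_K -> E1 -> \bar R)
  (mu1 : probability E1 R) (nu1 : probability (betaT R dk) R)
  (Y1 : cvec R dk -> cvec R dk -> E1 -> 'rV[R]_K)
  (d2 : measure_display) (E2 : measurableType d2)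
  (B2 : set 'rV[R]_K) (D2 : 'rV[R]_K -> E2 -> \bar R)
  (mu2 : probability E2 R) (nu2 : probability (betaT R dk) R)
  (Y2 : cvec R dk -> cvec R dk -> E2 -> 'rV[R]_K) :
  hypotheses B1 D1 mu1 nu1 Y1 hd1 Mbar ->
  hypotheses B2 D2 mu2 nu2 Y2 hd1 Mbar ->
  (* a priori known moments of beta_{1,1} *)
  (forall M, (0 < M)%N -> upto Mbar M ->
     (\int[nu1]_b (mom (nseq M (c11 hd1)) b)%:E =
      \int[nu2]_b (mom (nseq M (c11 hd1)) b)%:E)%E) ->
  (* same average structural function on H \cap R^d_+ *)
  (exists2 eps : R, 0 < eps &
     forall x : cvec R dk, (forall c, 0 <= x c < eps) ->
       forall k, ASF mu1 nu1 Y1 x k = ASF mu2 nu2 Y2 x k) ->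
  forall A : set (betaT R dk), measurable A -> nu1 A = nu2 A.
Proof.
move=> [_ [_ [A2_1 [A456_1 nu1_det]]]] [_ [_ [A2_2 [A456_2 _]]]] same_moment11.
move=> [eps eps0 same_ASF] A mA; apply/esym/nu1_det => // s s0 sMbar.
have [A4_1 [A5_1 A6_1]] := A456_1 _ s0 sMbar.
have [_ [A5_2 _]] := A456_2 _ s0 sMbar.
split; first exact: A5_2.2.1.
apply/esym/(moments_identified A2_1 A2_2 A4_1 A6_1 A5_1 A5_2 _ eps0 same_ASF) => //.
exact: same_moment11.
Qed.
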